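(* Let $\mathcal{Z}$ and $\mathcal{X}$ be two mutually unbiased orthonormal bases of $\mathbb{C}^2$. Assume the CQC conjecture holds for these bases, i.e. for every two-qubit state $\sigma_{AB}$ on $\mathbb{C}^2\otimes\mathbb{C}^2$ one has $I(Z^A:Z^B)+I(X^A:X^B)\le I(A:B)$. Then every two-qubit state $\rho_{AB}$ satisfies $$H(Z^AZ^B)+H(X^AX^B)\ \ge\ 2+H(AB).$$
   Context: All logarithms are base 2 and $0\log 0=0$. Two orthonormal bases $\{|z_i\rangle\}$, $\{|x_j\rangle\}$ of $\mathbb{C}^d$ are mutually unbiased if $|\langle z_i|x_j\rangle|^2=1/d$ for all $i,j$. $H(AB)$ is the von Neumann entropy of $\rho_{AB}$, $H(A),H(B)$ those of its marginals, and $I(A:B)=H(A)+H(B)-H(AB)$. For a basis $\mathcal{M}=\{|m_j\rangle\}$, $M^A$ and $M^B$ denote the classical random variables obtained when both parties measure their subsystem in $\mathcal{M}$, with joint distribution $p(j,k)=\langle m_j\otimes m_k|\rho_{AB}|m_j\otimes m_k\rangle$; $H(M^AM^B)$ is the Shannon entropy of this joint distribution and $I(M^A:M^B)=H(M^A)+H(M^B)-H(M^AM^B)$ the classical mutual information. *)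

From HB Require Import structures.
From mathcomp Require Import all_boot all_order all_algebra.
From mathcomp Require Import complex.
From mathcomp Require Import reals exp.
Set Implicit Arguments.
Unset Strict Implicit.
Unset Printing Implicit Defensive.
Import Order.TTheory GRing.Theory Num.Theory.
Local Open Scope ring_scope.
Local Open Scope sesquilinear_scope.

Section QInfo.
Variable R : realType.
Local Notation C := R[i].

Definition log2 (x : R) : R := ln x / ln 2.
Definition xlog2x (x : R) : R := if x == 0 then 0 else x * log2 x.

Definition shannon (T : finType) (p : T -> R) : R := - \sum_(t : T) xlog2x (p t).

(** von Neumann entropy: Shannon entropy of the eigenvalues of a (normal)
    matrix, the eigenvalues being the diagonal of its spectral decomposition
    A = P^-1 diag(sp) P given by spectral.v *)
Definition vN_entropy n (A : 'M[C]_n) : R :=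
  - \sum_(i < n) xlog2x (complex.Re (spectral_diag A 0 i)).

(** index of |i> (x) |k> in C^2 (x) C^2 = C^(2*2) *)
Definition pidx (i k : 'I_2) : 'I_(2 * 2) := mxvec_index i k.

Definition psd n (A : 'M[C]_n) : Prop :=
  forall v : 'cV[C]_n, 0 <= (v ^t* *m A *m v) 0 0.
Definition two_qubit_state (rho : 'M[C]_(2 * 2)) : Prop :=
  psd rho /\ \tr rho = 1.

Definition ptraceB (rho : 'M[C]_(2 * 2)) : 'M[C]_2 :=
  \matrix_(i, j) \sum_(k < 2) rho (pidx i k) (pidx j k).
Definition ptraceA (rho : 'M[C]_(2 * 2)) : 'M[C]_2 :=
  \matrix_(i, j) \sum_(k < 2) rho (pidx k i) (pidx k j).

Definition HAB (rho : 'M[C]_(2 * 2)) : R := vN_entropy rho.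
Definition HA (rho : 'M[C]_(2 * 2)) : R := vN_entropy (ptraceA rho).
Definition HB (rho : 'M[C]_(2 * 2)) : R := vN_entropy (ptraceB rho).
Definition qmutinf rho : R := HA rho + HB rho - HAB rho.

(** orthonormal bases of C^2 (vectors as row vectors, dotmx = inner product) *)
Definition orthonormal_basis (b : 'I_2 -> 'rV[C]_2) : Prop :=
  forall i j, dotmx (b i) (b j) = (i == j)%:R.

Definition mutually_unbiased (z x : 'I_2 -> 'rV[C]_2) : Prop :=
  forall i j, `|dotmx (z i) (x j)| ^+ 2 = 2%:R^-1.

(** joint distribution p(j,k) = <m_j (x) m_k | rho | m_j (x) m_k> *)
Definition meas_joint (m : 'I_2 -> 'rV[C]_2) (rho : 'M[C]_(2 * 2))
  (jk : 'I_2 * 'I_2) : R :=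
  complex.Re (\sum_(a < 2) \sum_(b < 2) \sum_(c < 2) \sum_(d < 2)
     (m jk.1 0 a)^* * (m jk.2 0 b)^* * rho (pidx a b) (pidx c d)
       * m jk.1 0 c * m jk.2 0 d).

Definition meas_margA m rho (j : 'I_2) : R := \sum_(k < 2) meas_joint m rho (j, k).
Definition meas_margB m rho (k : 'I_2) : R := \sum_(j < 2) meas_joint m rho (j, k).

Definition HMM m rho : R := shannon (meas_joint m rho).
Definition cmutinf m rho : R :=
  shannon (meas_margA m rho) + shannon (meas_margB m rho) - HMM m rho.

End QInfo.

From HB Require Import structures.
From mathcomp Require Import all_boot all_order all_algebra.
From mathcomp Require Import complex.
From mathcomp Require Import reals exp.
From mathcomp Require Import topology normedtype derive realfun.
From mathcomp Require Import ring lra.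
Import Order.TTheory GRing.Theory Num.Theory.
Import numFieldNormedType.Exports.
Set Implicit Arguments.
Unset Strict Implicit.
Unset Printing Implicit Defensive.
Local Open Scope ring_scope.
Local Open Scope sesquilinear_scope.

(* Adding the CQC inequality to the entropic uncertainty relation
   H(Z) + H(X) >= 1 + H(s) for both one-qubit marginals s gives the claim.
   For a qubit s with eigenvalue l and outcome probabilities p, q in the two
   bases, 2p - 1 and 2q - 1 are the components of the Bloch vector of s along
   the Bloch vectors of the two bases, which are orthonormal because the bases
   are mutually unbiased; Bessel's inequality gives
   (2p - 1)^2 + (2q - 1)^2 <= (2l - 1)^2.  Writing the binary entropy as
   h((1 + t) / 2) = 1 - D(t) / (2 ln 2) with
   D(t) = (1 + t) ln (1 + t) + (1 - t) ln (1 - t), the relation follows from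
   D(a) + D(b) <= D(c) whenever a^2 + b^2 <= c^2 <= 1, which holds because
   D(t) / t^2 is nondecreasing on (0, 1]. *)

Section Defect.
Variable R : realType.
Implicit Types s t x : R.

Lemma ger0_is_derive_le (f df : R -> R) (a b : R) : a <= b ->
  (forall x, a <= x <= b -> is_derive x 1 f (df x)) ->
  (forall x, a < x < b -> 0 <= df x) -> f a <= f b.
Proof.
rewrite le_eqVlt => /orP[/eqP->//|lt_ab] fdf df_ge0.
have [c] : exists2 c, c \in `]a, b[ & f b - f a = df c * (b - a).
  apply: MVT => // [x|].
    by rewrite in_itv /= => /andP[ax xb]; apply: fdf; rewrite !ltW.
  apply: derivable_within_continuous => x; rewrite in_itv /= => axb.
  exact/ex_derive/fdf.
rewrite in_itv /= => /df_ge0 dfc_ge0 /eqP; rewrite subr_eq => /eqP ->.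
by rewrite lerDr mulr_ge0 // subr_ge0 ltW.
Qed.

(* [defect t] is 2 ln 2 times the entropy defect 1 - h((1 + t) / 2) of a bit
   with bias t (see [bin_entropyE]); [lnratio] is its derivative. *)
Definition defect t := (1 + t) * ln (1 + t) + (1 - t) * ln (1 - t).
Definition lnratio t := ln (1 + t) - ln (1 - t).

Lemma is_derive_defect t : -1 < t < 1 -> is_derive t 1 defect (lnratio t).
Proof.
move=> /andP[t_gtN1 t_lt1].
have ln1D : is_derive (1 + t) 1 (@ln R) (1 + t)^-1 by apply: is_derive1_ln; lra.
have ln1B : is_derive (1 - t) 1 (@ln R) (1 - t)^-1 by apply: is_derive1_ln; lra.
(* [is_derive_eq] builds the derivative by instance resolution, which also
   uses the derivative facts and nonvanishing denominators in the context. *)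
rewrite /defect; apply: is_derive_eq.
rewrite /lnratio /GRing.scale /=; field; lra.
Qed.

Lemma is_derive_lnratio t : -1 < t < 1 ->
  is_derive t 1 lnratio ((1 + t)^-1 + (1 - t)^-1).
Proof.
move=> /andP[t_gtN1 t_lt1].
have ln1D : is_derive (1 + t) 1 (@ln R) (1 + t)^-1 by apply: is_derive1_ln; lra.
have ln1B : is_derive (1 - t) 1 (@ln R) (1 - t)^-1 by apply: is_derive1_ln; lra.
rewrite /lnratio; apply: is_derive_eq.
rewrite /GRing.scale /=; ring.
Qed.

Lemma defect0 : defect 0 = 0.
Proof. by rewrite /defect addr0 subr0 ln1 mulr0 addr0. Qed.

Lemma defect1 : defect 1 = 2 * ln 2.
Proof. by rewrite /defect subrr mul0r addr0. Qed.

Lemma defectN t : defect (- t) = defect t.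
Proof. by rewrite /defect opprK addrC. Qed.

Lemma lnratio_ge0 t : 0 <= t < 1 -> 0 <= lnratio t.
Proof. by move=> /andP[? ?]; rewrite subr_ge0 ler_ln ?posrE; lra. Qed.

Lemma lnratio_le_invB t : 0 <= t < 1 -> lnratio t <= (1 - t)^-1 - (1 + t)^-1.
Proof.
move=> /andP[t_ge0 t_lt1]; rewrite -subr_ge0.
have -> : 0 = (1 - 0)^-1 - (1 + 0)^-1 - lnratio 0 :> R.
  by rewrite /lnratio subr0 addr0 ln1 !subrr.
apply: (@ger0_is_derive_le (fun x => (1 - x)^-1 - (1 + x)^-1 - lnratio x)
  (fun x => 4 * x ^+ 2 / (1 - x ^+ 2) ^+ 2)) => // x.
  move=> /andP[x_ge0 x_le_t].
  have xD1 : 1 + x != 0 by apply/lt0r_neq0; lra.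
  have xB1 : 1 - x != 0 by apply/lt0r_neq0; lra.
  have dL : is_derive x 1 lnratio ((1 + x)^-1 + (1 - x)^-1).
    by apply: is_derive_lnratio; lra.
  apply: is_derive_eq; rewrite /GRing.scale /=.
  by field; rewrite xD1 xB1 lt0r_neq0 //; nra.
move=> _; apply: mulr_ge0; first by rewrite mulr_ge0 // sqr_ge0.
by rewrite invr_ge0 sqr_ge0.
Qed.

Lemma defect_le_lnratio t : 0 <= t < 1 -> 2 * defect t <= t * lnratio t.
Proof.
move=> /andP[t_ge0 t_lt1]; rewrite -subr_ge0.
have -> : 0 = 0 * lnratio 0 - 2 * defect 0 :> R by rewrite defect0; ring.
apply: (@ger0_is_derive_le (fun x => x * lnratio x - 2 * defect x)
  (fun x => (1 - x)^-1 - (1 + x)^-1 - lnratio x)) => // x.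
  move=> /andP[x_ge0 x_le_t].
  have dL : is_derive x 1 lnratio ((1 + x)^-1 + (1 - x)^-1).
    by apply: is_derive_lnratio; lra.
  have dD : is_derive x 1 defect (lnratio x) by apply: is_derive_defect; lra.
  have xD1 : 1 + x != 0 by apply/lt0r_neq0; lra.
  have xB1 : 1 - x != 0 by apply/lt0r_neq0; lra.
  apply: is_derive_eq; rewrite /GRing.scale /=.
  by field; rewrite xD1 xB1.
by move=> /andP[? ?]; rewrite subr_ge0 lnratio_le_invB //; lra.
Qed.

Lemma defect_div_sqr_le s t : 0 < s -> s <= t -> t < 1 ->
  defect s / s ^+ 2 <= defect t / t ^+ 2.
Proof.
move=> s_gt0 le_st t_lt1.
apply: (@ger0_is_derive_le (fun x => defect x / x ^+ 2)
  (fun x => (x * lnratio x - 2 * defect x) / x ^+ 3)) => // x.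
  move=> /andP[? ?].
  have x_neq0 : x != 0 by apply/lt0r_neq0; lra.
  have x2_neq0 : x ^+ 2 != 0 by rewrite expf_neq0.
  have dD : is_derive x 1 defect (lnratio x) by apply: is_derive_defect; lra.
  apply: is_derive_eq; rewrite /GRing.scale /=.
  by field.
move=> /andP[? ?]; apply: divr_ge0; last by rewrite exprn_ge0 //; lra.
by rewrite subr_ge0 defect_le_lnratio //; lra.
Qed.

Lemma ln2_gt0 : 0 < ln (2 : R).
Proof. by rewrite ln_gt0 // ltr1n. Qed.

Lemma defect_ge0 t : 0 <= t <= 1 -> 0 <= defect t.
Proof.
move=> /andP[t_ge0]; rewrite le_eqVlt => /orP[/eqP->|t_lt1].
  by rewrite defect1 mulr_ge0 // ltW // ln2_gt0.
rewrite -defect0; apply: (@ger0_is_derive_le defect lnratio) => // x.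
  by move=> /andP[? ?]; apply: is_derive_defect; lra.
by move=> /andP[? ?]; apply: lnratio_ge0; lra.
Qed.

Lemma defect_le_defect1 t : 0 <= t <= 1 -> defect t <= defect 1.
Proof.
move=> /andP[t_ge0 t_le1]; rewrite defect1 /defect.
have ln_le2 : ln (1 + t) <= ln 2 by rewrite ler_ln ?posrE; lra.
have ln_ge0 : 0 <= ln (1 + t) by rewrite ln_ge0; lra.
have : ln (1 - t) <= 0 by rewrite ln_le0; lra.
nra.
Qed.

Lemma ler_of_mulr_sqr_lt1 (A B s : R) : 0 <= s < 1 ->
  (forall t, s <= t < 1 -> A * t ^+ 2 <= B) -> A <= B.
Proof.
move=> /andP[s_ge0 s_lt1] bound.
have [A_le0|A_gt0] := lerP A 0.
  have s2_le1 : s ^+ 2 <= 1 by nra.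
  by apply: le_trans (bound s _); [nra | lra].
(* If B < A, a t close to 1 with A * (2 * t - 1) > B contradicts the bound,
   as t ^+ 2 >= 2 * t - 1. *)
rewrite leNgt; apply/negP => B_lt_A.
have [u Au] : exists u, 2 * A * u = A + B.
  by exists ((A + B) / (2 * A)); rewrite mulrC divfK // mulf_neq0 // lt0r_neq0.
have u_lt1 : u < 1.
  by rewrite -subr_gt0 -(pmulr_rgt0 _ A_gt0) mulrBr mulr1; lra.
pose t := Num.max s ((u + 1) / 2).
have le_st : s <= t by rewrite le_max lexx.
have lt_ut : u < t by rewrite lt_max; apply/orP; right; lra.
have t_lt1 : t < 1 by rewrite gt_max s_lt1 /=; lra.
have := bound t; rewrite le_st t_lt1 => /(_ isT).
have : 0 <= A * (t - 1) ^+ 2 by rewrite mulr_ge0 ?sqr_ge0 ?ltW.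
have : 0 < A * (t - u) by rewrite mulr_gt0 ?subr_gt0.
nra.
Qed.

Lemma defect_div_sqr_le1 s : 0 < s -> s <= 1 -> defect s / s ^+ 2 <= defect 1.
Proof.
move=> s_gt0; rewrite le_eqVlt => /orP[/eqP->|s_lt1].
  by rewrite expr1n divr1.
(* [defect] is not differentiable at 1, so the monotonicity of
   [defect t / t ^+ 2] is carried to t = 1 by a limit. *)
apply: (@ler_of_mulr_sqr_lt1 _ _ s) => [|t /andP[le_st t_lt1]]; first lra.
apply: (@le_trans _ _ (defect t)); last by apply: defect_le_defect1; lra.
by rewrite -ler_pdivlMr ?exprn_gt0 ?defect_div_sqr_le //; lra.
Qed.

Lemma defect_le_div_sqr s t : 0 <= s <= t -> 0 < t <= 1 ->
  defect s <= defect t / t ^+ 2 * s ^+ 2.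
Proof.
move=> /andP[s_ge0 le_st] /andP[t_gt0 t_le1].
have [s0|s_gt0] := eqVneq s 0; first by rewrite s0 defect0 expr0n mulr0.
rewrite -ler_pdivrMr ?exprn_gt0 ?lt0r ?s_gt0 //.
have [t1|t_neq1] := eqVneq t 1.
  by rewrite t1 expr1n divr1 defect_div_sqr_le1 ?lt0r ?s_gt0 //; lra.
by rewrite defect_div_sqr_le ?lt0r ?s_gt0 // lt_neqAle t_neq1.
Qed.

Lemma defect_norm t : defect `|t| = defect t.
Proof. by case: (lerP 0 t) => [/ger0_norm|/ltr0_norm] ->; rewrite ?defectN. Qed.

Lemma defect_sqr_superadditive a b c : `|c| <= 1 -> a ^+ 2 + b ^+ 2 <= c ^+ 2 ->
  defect a + defect b <= defect c.
Proof.
rewrite -(defect_norm a) -(defect_norm b) -(defect_norm c).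
rewrite -(real_normK (num_real a)) -(real_normK (num_real b)).
rewrite -(real_normK (num_real c)).
move: (normr_ge0 a) (normr_ge0 b) (normr_ge0 c).
move: `|a| `|b| `|c| => x y z x_ge0 y_ge0 z_ge0 z_le1 sum_le.
have [z0|z_neq0] := eqVneq z 0.
  rewrite z0 expr0n /= in sum_le.
  have [-> ->] : x = 0 /\ y = 0.
    by split; apply/eqP; rewrite -sqrf_eq0 eq_le sqr_ge0 andbT; nra.
  by rewrite z0 defect0 addr0.
have z_gt0 : 0 < z by rewrite lt0r z_neq0.
have defect_le u : 0 <= u -> u ^+ 2 <= z ^+ 2 ->
    defect u <= defect z / z ^+ 2 * u ^+ 2.
  by move=> u_ge0 le_uz; rewrite defect_le_div_sqr ?z_gt0 ?z_le1 ?u_ge0 //=; nra.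
apply: (@le_trans _ _ (defect z / z ^+ 2 * (x ^+ 2 + y ^+ 2))).
  by rewrite mulrDr lerD // defect_le //; nra.
have ratio_ge0 : 0 <= defect z / z ^+ 2.
  by rewrite divr_ge0 ?sqr_ge0 // defect_ge0 // ltW.
by rewrite -[leRHS](divfK (_ : z ^+ 2 != 0)) ?ler_wpM2l // expf_neq0.
Qed.

End Defect.

Section BinaryEntropy.
Variable R : realType.

Definition bin_entropy (p : R) := - (xlog2x p + xlog2x (1 - p)).

Lemma xlnx_mul2 (y : R) : 0 <= y -> y * ln (2 * y) = y * ln y + y * ln 2.
Proof.
rewrite le_eqVlt => /orP[/eqP<-|y_gt0]; first by rewrite !mul0r addr0.
by rewrite lnM ?posrE // mulrDr addrC.
Qed.

Lemma xlog2xE (y : R) : xlog2x y = y * ln y / ln 2.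
Proof. by rewrite /xlog2x /log2; case: eqP => [->|_]; rewrite ?mul0r ?mulrA. Qed.

Lemma bin_entropyE p : 0 <= p <= 1 ->
  bin_entropy p = 1 - defect (2 * p - 1) / (2 * ln 2).
Proof.
move=> /andP[p_ge0 p_le1].
have ln2_neq0 := lt0r_neq0 (@ln2_gt0 R).
rewrite /bin_entropy /defect !xlog2xE.
have -> : 1 + (2 * p - 1) = 2 * p by ring.
have -> : 1 - (2 * p - 1) = 2 * (1 - p) by ring.
by rewrite -!mulrA !xlnx_mul2 ?subr_ge0 //; field.
Qed.

Lemma bin_entropy_uncertainty p q l : 0 <= l <= 1 ->
  (2 * p - 1) ^+ 2 + (2 * q - 1) ^+ 2 <= (2 * l - 1) ^+ 2 ->
  1 + bin_entropy l <= bin_entropy p + bin_entropy q.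
Proof.
move=> /andP[l_ge0 l_le1] sum_le.
have l_sqr : (2 * l - 1) ^+ 2 <= 1 by nra.
have in01 (x : R) : (2 * x - 1) ^+ 2 <= 1 -> 0 <= x <= 1.
  by move=> ?; apply/andP; split; nra.
have p01 : 0 <= p <= 1 by apply: in01; have := sqr_ge0 (2 * q - 1); lra.
have q01 : 0 <= q <= 1 by apply: in01; have := sqr_ge0 (2 * p - 1); lra.
rewrite !bin_entropyE ?l_ge0 ?l_le1 //.
have l_norm : `|2 * l - 1| <= 1 by rewrite ler_norml; apply/andP; split; lra.
have := defect_sqr_superadditive l_norm sum_le.
have : 0 < (2 * ln 2 : R)^-1 by rewrite invr_gt0 mulr_gt0 ?ln2_gt0.
move: (2 * ln 2)^-1 => k k_gt0 /(ler_wpM2r (ltW k_gt0)).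
by rewrite mulrDl; lra.
Qed.

End BinaryEntropy.

Lemma sum_ord2 (V : nmodType) (F : 'I_2 -> V) : \sum_(i < 2) F i = F 0 + F 1.
Proof. by rewrite big_ord_recl big_ord1; congr (_ + F _); apply: val_inj. Qed.

Lemma prod_ord2 (R : pzSemiRingType) (F : 'I_2 -> R) : \prod_(i < 2) F i = F 0 * F 1.
Proof. by rewrite big_ord_recl big_ord1; congr (_ * F _); apply: val_inj. Qed.

Lemma sum_mxvec_index (V : nmodType) m n (F : 'I_(m * n) -> V) :
  \sum_k F k = \sum_(i < m) \sum_(j < n) F (mxvec_index i j).
Proof.
rewrite pair_bigA (reindex _ (curry_mxvec_bij _ _)) /=.
by apply: eq_bigr => -[].
Qed.

Lemma det_mx2 (R : comPzRingType) (A : 'M[R]_2) :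
  \det A = A 0 0 * A 1 1 - A 0 1 * A 1 0.
Proof.
rewrite (expand_det_row _ 0) sum_ord2 /cofactor !det_mx11 !mxE.
have -> : lift 0 (0 : 'I_1) = 1 :> 'I_2 by apply: val_inj.
have -> : lift 1 (0 : 'I_1) = 0 :> 'I_2 by apply: val_inj.
by rewrite expr0 expr1 mul1r mulN1r mulrN.
Qed.

Lemma eq_mx2 (T : Type) (A B : 'M[T]_2) :
  A 0 0 = B 0 0 -> A 0 1 = B 0 1 -> A 1 0 = B 1 0 -> A 1 1 = B 1 1 -> A = B.
Proof.
have ord2 (i : 'I_2) : i = 0 \/ i = 1.
  by case: i => -[|[|//]] ?; [left|right]; apply: val_inj.
move=> e00 e01 e10 e11; apply/matrixP => i j.
by case: (ord2 i) => ->; case: (ord2 j) => ->.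
Qed.

Lemma bessel_ineq3 (R : realFieldType) (r1 r2 r3 u1 u2 u3 v1 v2 v3 : R) :
  u1 ^+ 2 + u2 ^+ 2 + u3 ^+ 2 = 1 -> v1 ^+ 2 + v2 ^+ 2 + v3 ^+ 2 = 1 ->
  u1 * v1 + u2 * v2 + u3 * v3 = 0 ->
  (r1 * u1 + r2 * u2 + r3 * u3) ^+ 2 + (r1 * v1 + r2 * v2 + r3 * v3) ^+ 2
    <= r1 ^+ 2 + r2 ^+ 2 + r3 ^+ 2.
Proof.
move=> u_unit v_unit uv_orth.
set ru := r1 * u1 + r2 * u2 + r3 * u3; set rv := r1 * v1 + r2 * v2 + r3 * v3.
(* Pythagoras for the orthogonal projection of r onto the span of u and v. *)
have -> : r1 ^+ 2 + r2 ^+ 2 + r3 ^+ 2 = (ru ^+ 2 + rv ^+ 2)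
    + ((r1 - ru * u1 - rv * v1) ^+ 2 + (r2 - ru * u2 - rv * v2) ^+ 2
       + (r3 - ru * u3 - rv * v3) ^+ 2)
    - ru ^+ 2 * (u1 ^+ 2 + u2 ^+ 2 + u3 ^+ 2 - 1)
    - rv ^+ 2 * (v1 ^+ 2 + v2 ^+ 2 + v3 ^+ 2 - 1)
    - 2 * ru * rv * (u1 * v1 + u2 * v2 + u3 * v3).
  by rewrite /ru /rv; ring.
by rewrite u_unit v_unit uv_orth !subrr !mulr0 !subr0 lerDl !addr_ge0 ?sqr_ge0.
Qed.

Section Qubit.
Variable R : realType.
Local Notation C := R[i].

Definition expect n (s : 'M[C]_n) (v : 'rV[C]_n) : C :=
  \sum_a \sum_b (v 0 a)^* * s a b * v 0 b.

Lemma quad_formE n (s : 'M[C]_n) (v : 'cV[C]_n) :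
  (v ^t* *m s *m v) 0 0 = expect s v^T.
Proof.
rewrite mxE /expect exchange_big; apply: eq_bigr => b _.
rewrite !mxE big_distrl; apply: eq_bigr => a _.
by rewrite !mxE.
Qed.

Lemma psd_expect_ge0 n (s : 'M[C]_n) v : psd s -> 0 <= expect s v.
Proof. by move=> /(_ v^T); rewrite quad_formE trmxK. Qed.

Section Spectral.
Variables (n : nat) (A : 'M[C]_n).
Hypothesis A_normal : A \is normalmx.
Local Notation P := (spectralmx A).
Local Notation d := (spectral_diag A).

Lemma spectral_diagE : P *m A *m P ^t* = diag_mx d.
Proof.
have P_unitary := spectral_unitarymx A.
have /orthomx_spectralP A_eq := A_normal.
rewrite [X in P *m X]A_eq.
rewrite invmx_unitary // !mulmxA (unitarymxP P_unitary) mul1mx.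
exact: mulmxtVK.
Qed.

Lemma mxtrace_spectral : \tr A = \sum_i d 0 i.
Proof.
rewrite -mxtrace_diag -spectral_diagE mxtrace_mulC mulmxA.
by rewrite -invmx_unitary ?spectral_unitarymx // mulVmx ?spectral_unit // mul1mx.
Qed.

Lemma det_spectral : \det A = \prod_i d 0 i.
Proof.
rewrite -det_diag -spectral_diagE -invmx_unitary ?spectral_unitarymx //.
by rewrite !det_mulmx det_inv mulrC mulrA mulVr ?mul1r // -unitmxE spectral_unit.
Qed.

Lemma psd_spectral_diag_ge0 i : psd A -> 0 <= d 0 i.
Proof.
move=> /(_ ((row i P) ^t*)); rewrite trmxCK.
have -> : d 0 i = diag_mx d i i by rewrite mxE eqxx mulr1n.
rewrite -spectral_diagE !mxE; congr (0 <= _).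
by apply: eq_bigr => b _; rewrite -row_mul !mxE.
Qed.

End Spectral.

Lemma expect_mx2 (s : 'M[C]_2) (v : 'rV[C]_2) : expect s v =
  (v 0 0)^* * s 0 0 * v 0 0 + (v 0 0)^* * s 0 1 * v 0 1
  + (v 0 1)^* * s 1 0 * v 0 0 + (v 0 1)^* * s 1 1 * v 0 1.
Proof. by rewrite /expect !sum_ord2 addrA. Qed.

Lemma psd2_hermitian (s : 'M[C]_2) : psd s -> s ^t* = s.
Proof.
move=> s_psd.
(* Polarization: test s on e0, e1, e0 + e1 and e0 + i e1. *)
have test a b : 0 <= expect s (\row_j (if j == 0 then a else b)).
  exact: psd_expect_ge0.
have [h00 h11 h01] : [/\ (s 0 0)^* = s 0 0, (s 1 1)^* = s 1 1 & (s 0 1)^* = s 1 0].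
  move: (test 1 0) (test 0 1) (test 1 1) (test 1 'i); rewrite !expect_mx2 !mxE /=.
  case: (s 0 0) => a b; case: (s 0 1) => c d; case: (s 1 0) => e f; case: (s 1 1) => g h.
  rewrite (_ : 0 = 0 +i* 0)%C // (_ : 1 = 1 +i* 0)%C //; simpc.
  move=> /andP[/eqP ? _] /andP[/eqP ? _] /andP[/eqP ? _] /andP[/eqP ? _].
  by split; congr (_ +i* _)%C; lra.
by apply: eq_mx2; rewrite !mxE // -h01 conjCK.
Qed.

Lemma qubit_spectrum (s : 'M[C]_2) : psd s -> \tr s = 1 ->
  exists2 l : R, 0 <= l <= 1 &
    vN_entropy s = bin_entropy l /\ l * (1 - l) = complex.Re (\det s).
Proof.
move=> s_psd tr1.
have s_normal : s \is normalmx by apply/normalmxP; rewrite psd2_hermitian.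
move: (psd_spectral_diag_ge0 s_normal 0 s_psd) (psd_spectral_diag_ge0 s_normal 1 s_psd).
move: (det_spectral s_normal) (mxtrace_spectral s_normal).
rewrite /vN_entropy tr1 sum_ord2 prod_ord2 sum_ord2.
case: (spectral_diag s 0 0) => l l'; case: (spectral_diag s 0 1) => m m'.
rewrite !lecE /= => -> tr_lm /andP[/eqP-> l_ge0] /andP[/eqP-> m_ge0].
have lm1 : l + m = 1 by move/(congr1 (@complex.Re R)): tr_lm; simpc.
exists l; first by apply/andP; split; lra.
by rewrite /bin_entropy (_ : m = 1 - l); [split; simpc | lra].
Qed.

Lemma bloch_mub_bound (s : 'M[C]_2) (a b : 'rV[C]_2) :
  s ^t* = s -> \tr s = 1 ->
  dotmx a a = 1 -> dotmx b b = 1 -> `|dotmx a b| ^+ 2 = 2^-1 ->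
  (2 * complex.Re (expect s a) - 1) ^+ 2 + (2 * complex.Re (expect s b) - 1) ^+ 2
    <= 1 - 4 * complex.Re (\det s).
Proof.
(* 2 <v|s|v> - 1 is the inner product of the Bloch vector
   (2 s00 - 1, 2 Re s01, 2 Im s01) of s, of squared norm 1 - 4 det s, with the
   Bloch vector of v. *)
move=> s_herm tr1.
have s10 : s 1 0 = (s 0 1)^*.
  by have /matrixP/(_ 1 0) := s_herm; rewrite !mxE.
have s11 : s 1 1 = 1 - s 0 0 by rewrite -tr1 /mxtrace sum_ord2 addrC addrK.
have s00 : complex.Im (s 0 0) = 0.
  have /matrixP/(_ 0 0) := s_herm; rewrite !mxE.
  by case: (s 0 0) => x y [] /=; lra.
rewrite det_mx2 !expect_mx2 s10 s11 !dotmxE !mxE !sum_ord2 !mxE normCK.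
move: s00; case: (s 0 0) => t t' /= ->.
case: (s 0 1) => w1 w2.
case: (a 0 0) => x0 y0; case: (a 0 1) => x1 y1; case: (b 0 0) => X0 Y0; case: (b 0 1) => X1 Y1.
move=> /(congr1 (@complex.Re R)) + /(congr1 (@complex.Re R)) + /(congr1 (@complex.Re R)).
rewrite (_ : 2^-1 = ((2 : R)^-1 +i* 0)%C); last by rewrite complexr0 fmorphV rmorph_nat.
simpc => /= a_unit b_unit ab_mub.
set Pa := (X in (2 * X - 1) ^+ 2 + _ <= _).
set Pb := (X in _ + (2 * X - 1) ^+ 2 <= _).
have -> : 2 * Pa - 1 = (2 * t - 1) * (x0 ^+ 2 + y0 ^+ 2 - x1 ^+ 2 - y1 ^+ 2)
    + 2 * w1 * (2 * (x0 * x1 + y0 * y1)) + 2 * w2 * (2 * (y0 * x1 - x0 * y1)).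
  by rewrite -[X in _ - X]a_unit /Pa; ring.
have -> : 2 * Pb - 1 = (2 * t - 1) * (X0 ^+ 2 + Y0 ^+ 2 - X1 ^+ 2 - Y1 ^+ 2)
    + 2 * w1 * (2 * (X0 * X1 + Y0 * Y1)) + 2 * w2 * (2 * (Y0 * X1 - X0 * Y1)).
  by rewrite -[X in _ - X]b_unit /Pb; ring.
rewrite (_ : 1 - 4 * _ = (2 * t - 1) ^+ 2 + (2 * w1) ^+ 2 + (2 * w2) ^+ 2); last by ring.
apply: bessel_ineq3.
- have := congr1 (fun x => x ^+ 2) a_unit; rewrite expr1n; apply: etrans; ring.
- have := congr1 (fun x => x ^+ 2) b_unit; rewrite expr1n; apply: etrans; ring.
- set L := (X in X = _) in ab_mub.
  have : 2 * L - (x0 * x0 + y0 * y0 + (x1 * x1 + y1 * y1))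
           * (X0 * X0 + Y0 * Y0 + (X1 * X1 + Y1 * Y1)) = 0.
    by rewrite ab_mub a_unit b_unit mulr1 divff ?subrr // pnatr_eq0.
  by apply: etrans; rewrite /L; ring.
Qed.

Lemma orthonormal_basis_complete (m : 'I_2 -> 'rV[C]_2) : orthonormal_basis m ->
  forall a b, \sum_k (m k 0 a)^* * m k 0 b = (a == b)%:R.
Proof.
move=> m_on a b.
pose M := \matrix_(k, c) m k 0 c.
have : M *m M ^t* = 1%:M.
  apply/matrixP => i j; rewrite !mxE -(m_on i j) dotmxE !mxE.
  by apply: eq_bigr => k _; rewrite !mxE.
move=> /mulmx1C/matrixP/(_ a b); rewrite !mxE => <-.
by apply: eq_bigr => k _; rewrite !mxE.
Qed.

Lemma sum_expect_basis (s : 'M[C]_2) m : orthonormal_basis m ->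
  \sum_j expect s (m j) = \tr s.
Proof.
move=> /orthonormal_basis_complete m_complete.
rewrite /expect /mxtrace exchange_big; apply: eq_bigr => a _.
rewrite exchange_big (eq_bigr (fun b => s a b * (a == b)%:R)) => [|b _].
  rewrite (bigD1 a) //= eqxx mulr1 big1 ?addr0 // => b.
  by rewrite eq_sym => /negbTE->; rewrite mulr0.
by rewrite -m_complete mulr_sumr; apply: eq_bigr => j _; ring.
Qed.

Lemma shannon_basis (s : 'M[C]_2) m : orthonormal_basis m -> \tr s = 1 ->
  shannon (fun j => complex.Re (expect s (m j)))
  = bin_entropy (complex.Re (expect s (m 0))).
Proof.
move=> m_on tr1.
have := congr1 (@complex.Re R) (sum_expect_basis s m_on).
rewrite tr1 sum_ord2 raddfD /= => sum1.
rewrite /shannon /bin_entropy sum_ord2.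
by have -> : complex.Re (expect s (m 1)) = 1 - complex.Re (expect s (m 0)) by lra.
Qed.

Lemma qubit_entropic_uncertainty (s : 'M[C]_2) (z x : 'I_2 -> 'rV[C]_2) :
  orthonormal_basis z -> orthonormal_basis x -> mutually_unbiased z x ->
  psd s -> \tr s = 1 ->
  1 + vN_entropy s <= shannon (fun j => complex.Re (expect s (z j)))
                      + shannon (fun j => complex.Re (expect s (x j))).
Proof.
move=> z_on x_on zx_mub s_psd tr1.
have [l l01 [-> det_l]] := qubit_spectrum s_psd tr1.
rewrite !shannon_basis //; apply: bin_entropy_uncertainty => //.
rewrite (_ : (2 * l - 1) ^+ 2 = 1 - 4 * (l * (1 - l))); last by ring.
by rewrite det_l; apply: bloch_mub_bound; rewrite ?psd2_hermitian ?z_on ?x_on ?zx_mub.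
Qed.

End Qubit.

Section TwoQubits.
Variable R : realType.
Local Notation C := R[i].
Implicit Types (rho : 'M[C]_(2 * 2)) (m : 'I_2 -> 'rV[C]_2).

(* The Kronecker product u (x) v, indexed by [pidx]. *)
Definition tens (u v : 'rV[C]_2) : 'rV[C]_(2 * 2) := mxvec (u^T *m v).

Lemma expect_tens rho (u v : 'rV[C]_2) : expect rho (tens u v) =
  \sum_a \sum_b \sum_c \sum_d
    (u 0 a)^* * (v 0 b)^* * rho (pidx a b) (pidx c d) * u 0 c * v 0 d.
Proof.
rewrite /expect sum_mxvec_index; apply: eq_bigr => a _; apply: eq_bigr => b _.
rewrite sum_mxvec_index; apply: eq_bigr => c _; apply: eq_bigr => d _.
by rewrite /tens !mxvecE !mxE !big_ord1 !mxE rmorphM; ring.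
Qed.

Lemma sum_expect_tensB rho (u : 'rV[C]_2) m : orthonormal_basis m ->
  \sum_k expect rho (tens u (m k)) = expect (ptraceB rho) u.
Proof.
move=> /orthonormal_basis_complete m_complete.
under eq_bigr do rewrite expect_tens.
transitivity (\sum_a \sum_c \sum_b \sum_d (u 0 a)^* * rho (pidx a b) (pidx c d) * u 0 c
    * \sum_k (m k 0 b)^* * m k 0 d).
  by rewrite !sum_ord2; ring.
under eq_bigr do under eq_bigr do under eq_bigr do under eq_bigr do rewrite m_complete.
by rewrite /expect !sum_ord2 !mxE !sum_ord2 /=; ring.
Qed.

Lemma sum_expect_tensA rho m (v : 'rV[C]_2) : orthonormal_basis m ->
  \sum_j expect rho (tens (m j) v) = expect (ptraceA rho) v.
Proof.
move=> /orthonormal_basis_complete m_complete.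
under eq_bigr do rewrite expect_tens.
transitivity (\sum_b \sum_d \sum_a \sum_c (v 0 b)^* * rho (pidx a b) (pidx c d) * v 0 d
    * \sum_j (m j 0 a)^* * m j 0 c).
  by rewrite !sum_ord2; ring.
under eq_bigr do under eq_bigr do under eq_bigr do under eq_bigr do rewrite m_complete.
by rewrite /expect !sum_ord2 !mxE !sum_ord2 /=; ring.
Qed.

Lemma delta_orthonormal_basis : orthonormal_basis (fun k => delta_mx 0 k : 'rV[C]_2).
Proof.
move=> i j; rewrite dotmxE !mxE !sum_ord2 !mxE /=.
by case: i j => -[|[|//]] ? [[|[|//]] ?]; simpc.
Qed.

Lemma psd_ptraceB rho : psd rho -> psd (ptraceB rho).
Proof.
move=> rho_psd v; rewrite quad_formE -(sum_expect_tensB _ _ delta_orthonormal_basis).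
by apply: sumr_ge0 => k _; apply: psd_expect_ge0.
Qed.

Lemma psd_ptraceA rho : psd rho -> psd (ptraceA rho).
Proof.
move=> rho_psd v; rewrite quad_formE -(sum_expect_tensA _ _ delta_orthonormal_basis).
by apply: sumr_ge0 => k _; apply: psd_expect_ge0.
Qed.

Lemma mxtrace_ptraceB rho : \tr (ptraceB rho) = \tr rho.
Proof. by rewrite /mxtrace sum_mxvec_index !sum_ord2 !mxE !sum_ord2. Qed.

Lemma mxtrace_ptraceA rho : \tr (ptraceA rho) = \tr rho.
Proof. by rewrite /mxtrace sum_mxvec_index !sum_ord2 !mxE !sum_ord2; ring. Qed.

Lemma meas_jointE m rho j k :
  meas_joint m rho (j, k) = complex.Re (expect rho (tens (m j) (m k))).
Proof. by rewrite /meas_joint expect_tens. Qed.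

Lemma meas_margA_ptraceB m rho j : orthonormal_basis m ->
  meas_margA m rho j = complex.Re (expect (ptraceB rho) (m j)).
Proof.
move=> m_on; rewrite -(sum_expect_tensB _ _ m_on) raddf_sum.
by apply: eq_bigr => k _; rewrite meas_jointE.
Qed.

Lemma meas_margB_ptraceA m rho k : orthonormal_basis m ->
  meas_margB m rho k = complex.Re (expect (ptraceA rho) (m k)).
Proof.
move=> m_on; rewrite -(sum_expect_tensA _ _ m_on) raddf_sum.
by apply: eq_bigr => j _; rewrite meas_jointE.
Qed.

Lemma shannon_margA m rho : orthonormal_basis m ->
  shannon (meas_margA m rho) = shannon (fun j => complex.Re (expect (ptraceB rho) (m j))).
Proof.
by move=> m_on; congr -%R; apply: eq_bigr => j _; rewrite meas_margA_ptraceB.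
Qed.

Lemma shannon_margB m rho : orthonormal_basis m ->
  shannon (meas_margB m rho) = shannon (fun k => complex.Re (expect (ptraceA rho) (m k))).
Proof.
by move=> m_on; congr -%R; apply: eq_bigr => k _; rewrite meas_margB_ptraceA.
Qed.

End TwoQubits.

Theorem proposition1 (R : realType) (Z X : 'I_2 -> 'rV[R[i]]_2) :
  orthonormal_basis Z -> orthonormal_basis X -> mutually_unbiased Z X ->
  (forall sigma : 'M[R[i]]_(2 * 2), two_qubit_state sigma ->
     cmutinf Z sigma + cmutinf X sigma <= qmutinf sigma) ->
  forall rho : 'M[R[i]]_(2 * 2), two_qubit_state rho ->
    HMM Z rho + HMM X rho >= 2 + HAB rho.
Proof.
move=> Z_on X_on ZX_mub CQC rho [rho_psd tr1].
have := CQC rho (conj rho_psd tr1); rewrite /cmutinf /qmutinf /HA /HB.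
rewrite !shannon_margA // !shannon_margB //.
have := qubit_entropic_uncertainty Z_on X_on ZX_mub (psd_ptraceB rho_psd)
  (etrans (mxtrace_ptraceB rho) tr1).
have := qubit_entropic_uncertainty Z_on X_on ZX_mub (psd_ptraceA rho_psd)
  (etrans (mxtrace_ptraceA rho) tr1).
lra.
Qed.
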